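(* Let $\mathcal F$ be any family of linear functionals on $\mathbb R^n$ and $\Sigma_{\mathcal F}=\bigcap_{\ell\in\mathcal F}\{\mathbf v\in\mathbb R^n:\ \ell(\mathbf v)\ge0\}$. If a solution of system (CSF) has $\mathbf v_i(0)\in\Sigma_{\mathcal F}$ for all $i$, then $\mathbf v_i(t)\in\Sigma_{\mathcal F}$ for all $i$ and all $t\ge0$.
   Context: Fix integers $N\ge1$, $n\ge1$, masses $m_1,\dots,m_N>0$ with $M=\sum_i m_i$, parameters $\sigma>0$, $p>0$, $\kappa\ge0$, and a communication kernel $\phi:[0,\infty)\to(0,\infty)$ that is smooth, positive and non-increasing. Write $\phi_{ij}=\phi(|\mathbf x_i-\mathbf x_j|)$, with $|\cdot|$ the Euclidean norm on $\mathbb R^n$. System (CSF) is, for $i=1,\dots,N$, $$\dot{\mathbf x}_i=\mathbf v_i,\qquad \dot{\mathbf v}_i=\sum_{j=1}^N m_j\phi_{ij}(\mathbf v_j-\mathbf v_i)+\sigma(\theta_i-|\mathbf v_i|^p)\mathbf v_i,\qquad \dot\theta_i=\kappa\sum_{j=1}^N m_j\phi_{ij}(\theta_j-\theta_i),$$ with $\mathbf x_i,\mathbf v_i\in\mathbb R^n$ and initial values $\theta_i(0)>0$; solutions are considered for $t\ge0$. *)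

From HB Require Import structures.
From mathcomp Require Import all_boot all_order all_algebra.
From mathcomp Require Import all_classical all_reals all_analysis.
Set Implicit Arguments. Unset Strict Implicit. Unset Printing Implicit Defensive.
Import Order.TTheory GRing.Theory Num.Theory.
Import numFieldNormedType.Exports.
Local Open Scope classical_set_scope.
Local Open Scope ring_scope.

Definition enorm (R : realType) (n : nat) (v : 'rV[R]_n) : R :=
  Num.sqrt (\sum_(k < n) v ord0 k ^+ 2).

Definition smooth (R : realType) (f : R -> R) : Prop :=
  forall (k : nat) (x : R), derivable (iter k (fun g : R -> R => derive1 g) f) x 1.

Definition comm_kernel (R : realType) (phi : R -> R) : Prop :=
  smooth phi /\ (forall r, 0 <= r -> 0 < phi r) /\
  (forall r s, 0 <= r -> r <= s -> phi s <= phi r).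

Definition lin_functional (R : realType) (n : nat) (l : 'rV[R]_n -> R) : Prop :=
  forall (a : R) (u w : 'rV[R]_n), l (a *: u + w) = a * l u + l w.

Definition SigmaF (R : realType) (n : nat) (F : set ('rV[R]_n -> R)) : set 'rV[R]_n :=
  [set v | forall l, F l -> 0 <= l v].

Definition CSF_solution (R : realType) (N n : nat) (m : 'I_N -> R)
  (sigma p kappa : R) (phi : R -> R)
  (x v : 'I_N -> R -> 'rV[R]_n) (theta : 'I_N -> R -> R) : Prop :=
  (forall i : 'I_N, {within `[0, +oo[, continuous (x i)}) /\
  (forall i : 'I_N, {within `[0, +oo[, continuous (v i)}) /\
  (forall i : 'I_N, {within `[0, +oo[, continuous (theta i)}) /\
  (forall (i : 'I_N) (t : R), 0 < t -> is_derive t 1 (x i) (v i t)) /\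
  (forall (i : 'I_N) (t : R), 0 < t -> is_derive t 1 (v i)
      (\sum_(j < N) (m j * phi (enorm (x i t - x j t))) *: (v j t - v i t)
       + (sigma * (theta i t - (enorm (v i t)) `^ p)) *: v i t)) /\
  (forall (i : 'I_N) (t : R), 0 < t -> is_derive t 1 (theta i)
      (kappa * \sum_(j < N) m j * phi (enorm (x i t - x j t)) * (theta j t - theta i t))).

From HB Require Import structures.
From mathcomp Require Import all_boot all_order all_algebra.
From mathcomp Require Import all_classical all_reals all_analysis.
From mathcomp Require Import ring lra.
Set Implicit Arguments.
Unset Strict Implicit.
Unset Printing Implicit Defensive.

Import Order.TTheory GRing.Theory Num.Theory.
Import numFieldNormedType.Exports.
Local Open Scope classical_set_scope.
Local Open Scope ring_scope.

(* Fix a linear functional l in F and a time t >= 0, and put y_j(s) = l(v_j(s)).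
   By linearity y_j solves the cooperative linear system
     y_j' = sum_k a_jk (y_k - y_j) + b_j y_j,
   where a_jk = m_k phi(|x_j - x_k|) lies in [0, m_k phi(0)] because phi is
   positive and non-increasing, and b_j = sigma (theta_j - |v_j|^p) is bounded
   above on [0, t] because theta is continuous there.  For such a system the
   negative-part energy S = sum_j min(y_j, 0)^2 is differentiable with
   S' = sum_j 2 min(y_j, 0) y_j' <= K S, so by Grönwall S e^{-K s} cannot
   increase; as S(0) = 0 we get S(t) = 0, i.e. y_j(t) >= 0 for all j. *)

Section WithinContinuity.
Variables (R : realType) (T : topologicalType) (A : set T).

Lemma within_continuousM (f g : T -> R) :
  {within A, continuous f} -> {within A, continuous g} ->
  {within A, continuous (fun s => f s * g s)}.
Proof. by move=> cf cg x; exact: continuousM (cf x) (cg x). Qed.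

Lemma within_continuous_sum (k : nat) (h : 'I_k -> T -> R) :
  (forall i, {within A, continuous (h i)}) ->
  {within A, continuous (fun s => \sum_(i < k) h i s)}.
Proof.
move=> ch; have -> : (fun s => \sum_(i < k) h i s) = \sum_(i < k) h i.
  by apply/funext => s; rewrite fct_sumE.
apply: (big_ind (fun f : T -> R => {within A, continuous f})) => //.
- by move=> x; exact: cvg_cst.
- by move=> f g cf cg x; exact: continuousD (cf x) (cg x).
Qed.

End WithinContinuity.

Section LinearFunctional.
Variables (R : realType) (n : nat) (l : 'rV[R]_n -> R).
Hypothesis linl : lin_functional l.

Lemma lin0 : l 0 = 0.
Proof.
have /eqP := linl 1 0 0; rewrite scaler0 addr0 mul1r -subr_eq subrr eq_sym.
by move/eqP.
Qed.

Lemma linD u w : l (u + w) = l u + l w.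
Proof. by rewrite -[u in LHS]scale1r linl mul1r. Qed.

Lemma linZ a u : l (a *: u) = a * l u.
Proof. by rewrite -[_ *: u]addr0 linl lin0 addr0. Qed.

Lemma linB u w : l (u - w) = l u - l w.
Proof. by rewrite linD -scaleN1r linZ mulN1r. Qed.

Lemma lin_sum (I : Type) (r : seq I) (P : pred I) (F : I -> 'rV[R]_n) :
  l (\sum_(i <- r | P i) F i) = \sum_(i <- r | P i) l (F i).
Proof. by elim/big_rec2: _ => [|i x y _ <-]; [exact: lin0 | exact: linD]. Qed.

Lemma lin_coord u : l u = \sum_(k < n) u ord0 k * l (delta_mx ord0 k).
Proof.
rewrite [u in LHS]row_sum_delta lin_sum.
by apply: eq_bigr => k _; rewrite linZ.
Qed.

Lemma within_continuous_lin (A : set R) (f : R -> 'rV[R]_n) :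
  {within A, continuous f} -> {within A, continuous (fun s => l (f s))}.
Proof.
move=> cf; have -> : (fun s => l (f s)) =
    (fun s => \sum_(k < n) f s ord0 k * l (delta_mx ord0 k)).
  by apply/funext => s; rewrite lin_coord.
apply: within_continuous_sum => k; apply: within_continuousM => [s|s].
- exact: continuous_comp (cf s) (@coord_continuous R 1 n ord0 k (f s)).
- exact: cvg_cst.
Qed.

Lemma is_derive_lin (f : R -> 'rV[R]_n) (t : R) (df : 'rV[R]_n) :
  is_derive t 1 f df -> is_derive t 1 (fun s => l (f s)) (l df).
Proof.
move=> [fdiff fdf].
have -> : (fun s => l (f s)) =
    \sum_(k < n) (fun s => f s ord0 k * l (delta_mx ord0 k)).
  by apply/funext => s; rewrite lin_coord fct_sumE.
rewrite lin_coord; apply: is_derive_sum => k.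
have dfk : is_derive t 1 (fun s => f s ord0 k) (df ord0 k).
  apply: DeriveDef; first exact: (derivable_mxP f t 1).1 fdiff ord0 k.
  by rewrite -fdf derive_mx // mxE.
have := is_deriveM dfk (is_derive_cst (l (delta_mx ord0 k)) t 1).
by rewrite scaler0 add0r [X in is_derive _ _ _ X]mulrC.
Qed.

End LinearFunctional.

Section NegativePartCalculus.
Variable R : realType.

Lemma is_derive_sq_dominated (f g : R -> R) (t d : R) :
  is_derive t 1 f d -> (forall s, `|g s - g t| <= (f s - f t) ^+ 2) ->
  is_derive t 1 g 0.
Proof.
move=> [fdiff fdf] gdom.
pose q (h : R) := h^-1 *: (f (h *: 1 + t) - f t).
pose r (h : R) := `|h| * (q h * q h).
have qd : q @ 0^' --> d by rewrite -fdf; exact: fdiff.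
have r0 : r @ 0^' --> 0.
  have h0 : (fun h : R => `|h|) @ 0^' --> (0 : R).
    have hid : (fun h : R => h) @ 0^' --> (0 : R) by exact: nbhs_dnbhs.
    by have := cvg_norm hid; rewrite normr0; exact.
  by have := cvgM h0 (cvgM qd qd); rewrite mul0r; exact.
have quot_le h : `|h^-1 *: (g (h *: 1 + t) - g t)| <= r h.
  have [->|hn0] := eqVneq h 0; first by rewrite invr0 !scale0r normr0 /r normr0 mul0r.
  rewrite /r /q /GRing.scale /= normrM normfV -expr2 exprMn.
  have -> : `|h| * (h^-1 ^+ 2 * (f (h * 1 + t) - f t) ^+ 2) =
      `|h|^-1 * (f (h * 1 + t) - f t) ^+ 2.
    rewrite -[h^-1 ^+ 2]real_normK ?realV ?num_real // normfV.
    by field; rewrite normr_eq0.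
  by rewrite ler_wpM2l // invr_ge0.
have quot0 : (fun h : R => h^-1 *: (g (h *: 1 + t) - g t)) @ 0^' --> 0.
  apply: (@squeeze_cvgr _ _ _ _ (fun h => - r h) r); last exact: r0.
  - by apply: nearW => h /=; rewrite -ler_norml quot_le.
  - by have := cvgN r0; rewrite oppr0; exact.
by apply: DeriveDef; [apply/cvg_ex; exists 0 | exact: cvg_lim].
Qed.

Lemma is_derive_sqmin (f : R -> R) (t d : R) :
  is_derive t 1 f d ->
  is_derive t 1 (fun s => Num.min (f s) 0 ^+ 2) (2 * Num.min (f t) 0 * d).
Proof.
move=> fd.
have cf : {for t, continuous f}.
  by apply: differentiable_continuous; apply/derivable1_diffP; case: fd.
have [ft0|ft0|ft0] := ltgtP (f t) 0.
- apply: near_eq_is_derive (is_deriveX 2 fd); near=> s.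
  rewrite /= min_l ?expr2 //; near: s.
  by apply: filterS (cvgr_lt (f t) cf 0 ft0) => s /ltW.
- rewrite mulr0 mul0r; apply: near_eq_is_derive (is_derive_cst 0 t 1); near=> s.
  rewrite /= min_r ?expr2 ?mulr0 //; near: s.
  by apply: filterS (cvgr_gt (f t) cf 0 ft0) => s /ltW.
- rewrite ft0 mulr0 mul0r.
  have := is_derive_sq_dominated (g := fun s => Num.min (f s) 0 ^+ 2) fd.
  apply=> s; rewrite ft0 subr0 minxx expr0n subr0 ger0_norm ?sqr_ge0 //.
  by case: (leP (f s) 0) => _; rewrite ?lexx // expr0n sqr_ge0.
Unshelve. all: by end_near.
Qed.

(* Grönwall's inequality in the form needed: if S' <= K S on ]a, b[ then
   S e^{-K s} is nonincreasing on [a, b], so S a <= 0 forces S b <= 0. *)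
Lemma gronwall_nonpos (S Sd : R -> R) (K a b : R) :
  a <= b -> {within `[a, b], continuous S} ->
  (forall s, s \in `]a, b[ -> is_derive s 1 S (Sd s)) ->
  (forall s, s \in `]a, b[ -> Sd s <= K * S s) ->
  S a <= 0 -> S b <= 0.
Proof.
move=> ab cS dS Sd_le Sa.
pose E s := expR (- (K * s)).
have dE (s : R) : is_derive s 1 E (E s * - K).
  have dlin : is_derive s 1 (fun r : R => - (K * r)) (- K).
    by have := is_deriveN (is_deriveZ K (is_derive_id s 1)); rewrite scaler1.
  exact: is_derive1_comp (is_derive_expR _) dlin.
have cE : continuous E.
  by move=> s; apply: differentiable_continuous; apply/derivable1_diffP; case: (dE s).
pose W s := S s * E s.
have dW (s : R) : s \in `]a, b[ -> is_derive s 1 W (S s *: (E s * - K) + E s *: Sd s).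
  by move=> sab; apply: is_deriveM (dS s sab) (dE s).
have W_nincr : W b <= W a.
  apply: (ler0_derive1_nincr _ _ _ (lexx a) ab (lexx b)).
  - by move=> s /dW [].
  - move=> s sab; rewrite derive1E; have [_ ->] := dW s sab; rewrite /GRing.scale /=.
    have := Sd_le s sab; have := expR_gt0 (- (K * s)); rewrite -/(E s); nra.
  - by apply: within_continuousM => // s; exact: continuous_subspaceT.
have := expR_gt0 (- (K * a)); have := expR_gt0 (- (K * b)).
by rewrite /W /E in W_nincr; nra.
Qed.

End NegativePartCalculus.

Definition neg_energy (R : realType) (N : nat) (y : 'I_N -> R) : R :=
  \sum_(j < N) Num.min (y j) 0 ^+ 2.

Section NegativeEnergy.
Variables (R : realType) (N : nat).
Implicit Types (y : 'I_N -> R) (u w : R).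

Lemma neg_energy_ge0 y : 0 <= neg_energy y.
Proof. by apply: sumr_ge0 => j _; exact: sqr_ge0. Qed.

Lemma neg_energy_term_le y j : Num.min (y j) 0 ^+ 2 <= neg_energy y.
Proof.
by rewrite /neg_energy (bigD1 j) //= lerDl; apply: sumr_ge0 => k _; exact: sqr_ge0.
Qed.

Lemma neg_energy_le0 y : neg_energy y <= 0 -> forall j, 0 <= y j.
Proof.
move=> y_le0 j; rewrite leNgt; apply/negP => yj_lt0.
have := neg_energy_term_le y j; rewrite min_l ?(ltW yj_lt0) // expr2.
have : 0 < y j * y j by rewrite nmulr_rgt0.
by lra.
Qed.

Lemma neg_energy_nonneg y : (forall j, 0 <= y j) -> neg_energy y = 0.
Proof. by move=> y_ge0; apply: big1 => j _; rewrite min_r ?expr0n. Qed.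

Lemma min0_mul_sub_le u w :
  Num.min u 0 * (w - u) <= Num.min u 0 ^+ 2 + Num.min w 0 ^+ 2.
Proof. by case: (leP u 0) => hu; case: (leP w 0) => hw; rewrite ?mul0r ?expr2; nra. Qed.

Lemma min0_mul_self u : Num.min u 0 * u = Num.min u 0 ^+ 2.
Proof. by case: (leP u 0) => hu; rewrite expr2 ?mul0r ?mulr0. Qed.

Lemma neg_energy_cooperative y (a : 'I_N -> 'I_N -> R) (b A : 'I_N -> R) (B : R) :
  (forall j k, 0 <= a j k <= A k) -> (forall j, b j <= B) -> 0 <= B ->
  \sum_(j < N) 2 * Num.min (y j) 0 *
      (\sum_(k < N) a j k * (y k - y j) + b j * y j)
  <= 2 * N%:R * (2 * \sum_(k < N) A k + B) * neg_energy y.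
Proof.
move=> a_bd b_bd B0; set S := neg_energy y.
have S0 : 0 <= S := neg_energy_ge0 y.
have term_le j : 2 * Num.min (y j) 0 *
    (\sum_(k < N) a j k * (y k - y j) + b j * y j)
    <= 2 * (2 * \sum_(k < N) A k + B) * S.
  have coupling : \sum_(k < N) a j k * (Num.min (y j) 0 * (y k - y j))
      <= (\sum_(k < N) A k) * (2 * S).
    rewrite mulr_suml; apply: ler_sum => k _; have /andP[a0 aA] := a_bd j k.
    apply: (@le_trans _ _ (a j k * (2 * S))).
      apply: ler_wpM2l => //; have := min0_mul_sub_le (y j) (y k).
      have := neg_energy_term_le y j; have := neg_energy_term_le y k.
      by rewrite -/S; lra.
    by apply: ler_wpM2r aA; lra.
  have growth : b j * (Num.min (y j) 0 * y j) <= B * S.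
    rewrite min0_mul_self; apply: (@le_trans _ _ (B * Num.min (y j) 0 ^+ 2)).
      by apply: ler_wpM2r (b_bd j); exact: sqr_ge0.
    by apply: ler_wpM2l => //; exact: neg_energy_term_le.
  have -> : 2 * Num.min (y j) 0 * (\sum_(k < N) a j k * (y k - y j) + b j * y j)
      = 2 * (\sum_(k < N) a j k * (Num.min (y j) 0 * (y k - y j))
             + b j * (Num.min (y j) 0 * y j)).
    rewrite -mulrA mulrDr mulr_sumr; congr (2 * (_ + _)); last by ring.
    by apply: eq_bigr => k _; ring.
  by lra.
apply: (le_trans (ler_sum _ (fun j _ => term_le j))).
rewrite sumr_const card_ord -mulr_natl le_eqVlt; apply/orP; left.
by apply/eqP; ring.
Qed.

End NegativeEnergy.

(* Invariance of the nonnegative orthant for a cooperative linear system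
   y_j' = sum_k a_jk (y_k - y_j) + b_j y_j with bounded coefficients: the
   negative-part energy satisfies a Grönwall inequality and starts at 0. *)
Lemma cooperative_nonneg (R : realType) (N : nat) (y : 'I_N -> R -> R)
    (a : 'I_N -> 'I_N -> R -> R) (b : 'I_N -> R -> R) (A : 'I_N -> R) (B t : R) :
  0 <= t -> 0 <= B ->
  (forall j, {within `[0, t], continuous (y j)}) ->
  (forall j s, s \in `]0, t[ ->
     is_derive s 1 (y j) (\sum_(k < N) a j k s * (y k s - y j s) + b j s * y j s)) ->
  (forall j k s, s \in `]0, t[ -> 0 <= a j k s <= A k) ->
  (forall j s, s \in `]0, t[ -> b j s <= B) ->
  (forall j, 0 <= y j 0) -> forall j, 0 <= y j t.
Proof.
move=> t0 B0 cy dy a_bd b_bd y0.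
pose S s := neg_energy (fun j => y j s).
have sqmin_cont : continuous (fun u : R => Num.min u 0 ^+ 2).
  move=> u; apply: differentiable_continuous; apply/derivable1_diffP.
  by case: (is_derive_sqmin (is_derive_id u 1)).
apply: (neg_energy_le0 (y := fun j => y j t)).
apply: (gronwall_nonpos (S := S) (K := 2 * N%:R * (2 * \sum_(k < N) A k + B)) t0).
- apply: within_continuous_sum => j s.
  exact: continuous_comp (cy j s) (sqmin_cont (y j s)).
- move=> s st; have -> : S = \sum_(j < N) (fun r => Num.min (y j r) 0 ^+ 2).
    by apply/funext => r; rewrite fct_sumE.
  by apply: is_derive_sum => j; exact: is_derive_sqmin (dy j s st).
- move=> s st; apply: neg_energy_cooperative => [j k|j|//].
  + exact: a_bd.
  + exact: b_bd.
- by rewrite /S neg_energy_nonneg.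
Qed.

(* Finitely many functions continuous on a compact interval admit a common
   nonnegative upper bound there (extreme value theorem for sum_j |f_j|). *)
Lemma bounded_above_on_interval (R : realType) (N : nat) (f : 'I_N -> R -> R)
    (a b : R) :
  a <= b -> (forall j, {within `[a, b], continuous (f j)}) ->
  exists2 B, 0 <= B & forall j s, s \in `[a, b] -> f j s <= B.
Proof.
move=> ab cf; pose F s := \sum_(j < N) `|f j s|.
have cF : {within `[a, b], continuous F}.
  apply: within_continuous_sum => j s.
  exact: continuous_comp (cf j s) (@norm_continuous _ R^o (f j s)).
have [c _ Fc] := EVT_max ab cF.
exists (F c); first by apply: sumr_ge0 => j _; exact: normr_ge0.
move=> j s sab; apply: le_trans (ler_norm _) (le_trans _ (Fc s sab)).
by rewrite /F (bigD1 j) //= lerDl; apply: sumr_ge0 => k _; exact: normr_ge0.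
Qed.

Theorem lemma2p1 (R : realType) (N n : nat) (m : 'I_N -> R)
  (sigma p kappa : R) (phi : R -> R)
  (x v : 'I_N -> R -> 'rV[R]_n) (theta : 'I_N -> R -> R)
  (F : set ('rV[R]_n -> R)) :
  (1 <= N)%N -> (1 <= n)%N ->
  (forall i, 0 < m i) -> 0 < sigma -> 0 < p -> 0 <= kappa ->
  comm_kernel phi ->
  (forall l, F l -> lin_functional l) ->
  CSF_solution m sigma p kappa phi x v theta ->
  (forall i, 0 < theta i 0) ->
  (forall i, SigmaF F (v i 0)) ->
  forall i t, 0 <= t -> SigmaF F (v i t).
Proof.
move=> _ _ m_gt0 sigma_gt0 _ _ [_ [phi_gt0 phi_nincr]] F_lin.
move=> [_ [cv [ctheta [_ [dv _]]]]] _ v0_in i t t0 l Fl.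
have linl := F_lin l Fl.
have within_0t (g : R -> R) : {within `[0, +oo[, continuous g} ->
    {within `[0, t], continuous g}.
  by apply: continuous_subspaceW => s; rewrite /= !in_itv /= => /andP[->].
have [Bth Bth0 theta_le] := bounded_above_on_interval t0 (fun j => within_0t _ (ctheta j)).
pose a j k s := m k * phi (enorm (x j s - x k s)).
pose b j s := sigma * (theta j s - enorm (v j s) `^ p).
apply: (cooperative_nonneg (y := fun j s => l (v j s)) (a := a) (b := b)
          (A := fun k => m k * phi 0) (B := sigma * Bth) t0) => //.
- by apply: mulr_ge0 => //; exact: ltW.
- by move=> j; apply: within_0t; exact: within_continuous_lin (cv j).
- move=> j s; rewrite in_itv => /andP[s0 _].
  have := is_derive_lin linl (dv j s s0).
  rewrite (linD linl) (lin_sum linl) (linZ linl).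
  under eq_bigr => k _ do rewrite (linZ linl) (linB linl).
  exact.
- move=> j k s _; have en0 : 0 <= enorm (x j s - x k s) by exact: sqrtr_ge0.
  apply/andP; split; first by rewrite /a mulr_ge0 ?ltW ?phi_gt0.
  by rewrite /a ler_pM2l //; exact: phi_nincr.
- move=> j s; rewrite in_itv => /andP[s0 st]; rewrite /b ler_pM2l //.
  have := theta_le j s; rewrite in_itv /= (ltW s0) (ltW st) => /(_ isT).
  by have := powR_ge0 (enorm (v j s)) p; lra.
- by move=> j; exact: v0_in.
Qed.
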